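(* Let $A$ be a $d$-dimensional system, $B=B_1B_2$ with $B_1$ finite-dimensional and $B_2$ a qubit, and $C$ a qubit. Let $\rho_1^{AB_1},\rho_2^{AB_1}$ be states, $p_1,p_2\ge0$ with $p_1+p_2=1$, and $$\rho^{ABC}=p_1\,\rho_1^{AB_1}\otimes|\Psi^+\rangle\langle\Psi^+|^{B_2C}+p_2\,\rho_2^{AB_1}\otimes|\Psi^-\rangle\langle\Psi^-|^{B_2C},$$ with $|\Psi^\pm\rangle=(|01\rangle\pm|10\rangle)/\sqrt2$. Then for every CPTP map $\Lambda$ on system $A$, $$E^{AB|C}\big((\Lambda^A\otimes\mathrm{id}^{BC})[\rho^{ABC}]\big)=\tfrac12\big\|(\Lambda^A\otimes\mathrm{id}^{B_1})[p_1\rho_1^{AB_1}-p_2\rho_2^{AB_1}]\big\|_1 .$$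
   Context: Negativity of a bipartite operator $X$ with respect to the cut $X_1|X_2$ is $E^{X_1|X_2}(X)=\frac{\|X^{T_{X_2}}\|_1-1}{2}$, where $T_{X_2}$ is the partial transpose on $X_2$ and $\|M\|_1=\mathrm{Tr}\sqrt{M^\dagger M}$; $E^{AB|C}$ treats $AB=AB_1B_2$ as one party and $C$ as the other. *)

From HB Require Import structures.
From mathcomp Require Import all_boot all_order all_algebra all_field.
From Stdlib Require Import ClassicalEpsilon.
Set Implicit Arguments. Unset Strict Implicit. Unset Printing Implicit Defensive.
Import Order.TTheory GRing.Theory Num.Theory.
Local Open Scope ring_scope.

Definition idx {m n} (i : 'I_m) (j : 'I_n) : 'I_(m * n) := mxvec_index i j.
Definition unidx {m n} (k : 'I_(m * n)) : 'I_m * 'I_n :=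
  enum_val (cast_ord (esym (@mxvec_cast m n)) k).
Definition ix1 {m n} (k : 'I_(m * n)) : 'I_m := (unidx k).1.
Definition ix2 {m n} (k : 'I_(m * n)) : 'I_n := (unidx k).2.

Definition adjmx {m n} (M : 'M[algC]_(m, n)) : 'M[algC]_(n, m) := (map_mx Num.conj M)^T.

Definition psd {n} (M : 'M[algC]_n) : Prop :=
  adjmx M = M /\ forall v : 'cV[algC]_n, 0 <= (adjmx v *m M *m v) 0 0.

Definition density {n} (M : 'M[algC]_n) : Prop := psd M /\ \tr M = 1.

Definition psd_sqrt {n} (P : 'M[algC]_n) : 'M[algC]_n :=
  epsilon (inhabits 0) (fun S : 'M[algC]_n => psd S /\ S *m S = P).
Definition trnorm {n} (M : 'M[algC]_n) : algC := \tr (psd_sqrt (adjmx M *m M)).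

(* (Lam (x) id_R)[X] for X an operator on A (x) R (A first factor). *)
Definition apply_A {d d' k} (Lam : 'M[algC]_d -> 'M[algC]_d')
    (X : 'M[algC]_(d * k)) : 'M[algC]_(d' * k) :=
  \matrix_(i, j)
    Lam (\matrix_(a, b) X (idx a (ix2 i)) (idx b (ix2 j))) (ix1 i) (ix1 j).

Definition CPTP {d d'} (Lam : {linear 'M[algC]_d -> 'M[algC]_d'}) : Prop :=
  (forall k (X : 'M[algC]_(d * k)), psd X -> psd (apply_A (k := k) Lam X)) /\
  (forall X, \tr (Lam X) = \tr X).

(* Four-party layout A (x) (B1 (x) (B2 (x) C)), i.e. index (a,(b1,(b2,c))). *)
Notation op4 d m := 'M[algC]_(d * (m * (2 * 2))).

Definition tens_AB1 {d m} (X : 'M[algC]_(d * m)) (Y : 'M[algC]_(2 * 2)) : op4 d m :=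
  \matrix_(i, j)
    (X (idx (ix1 i) (ix1 (ix2 i))) (idx (ix1 j) (ix1 (ix2 j))) *
     Y (ix2 (ix2 i)) (ix2 (ix2 j))).

Definition idxC {d m} (i : 'I_(d * (m * (2 * 2)))) : 'I_2 := ix2 (ix2 (ix2 i)).
Definition setC {d m} (i : 'I_(d * (m * (2 * 2)))) (c : 'I_2) : 'I_(d * (m * (2 * 2))) :=
  idx (ix1 i) (idx (ix1 (ix2 i)) (idx (ix1 (ix2 (ix2 i))) c)).

Definition ptransC {d m} (X : op4 d m) : op4 d m :=
  \matrix_(i, j) X (setC i (idxC j)) (setC j (idxC i)).

Definition negativity_ABC {d m} (X : op4 d m) : algC := (trnorm (ptransC X) - 1) / 2.

Definition ket2 (x y : 'I_2) : 'cV[algC]_(2 * 2) := delta_mx (idx x y) 0.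
Definition psi_plus : 'cV[algC]_(2 * 2) :=
  (sqrtC 2)^-1 *: (ket2 0 1 + ket2 1 0).
Definition psi_minus : 'cV[algC]_(2 * 2) :=
  (sqrtC 2)^-1 *: (ket2 0 1 - ket2 1 0).
Definition proj {n} (v : 'cV[algC]_n) : 'M[algC]_n := v *m adjmx v.

From HB Require Import structures.
From mathcomp Require Import all_boot all_order all_algebra all_field.
From mathcomp Require Import ring.
From Stdlib Require Import ClassicalEpsilon.
Set Implicit Arguments. Unset Strict Implicit. Unset Printing Implicit Defensive.
Import Order.TTheory GRing.Theory Num.Theory.
Local Open Scope ring_scope.

(* Write s_i = (Lam (x) id)[rho_i], S = p1 s1 + p2 s2 and D = p1 s1 - p2 s2.  By linearity
   the channel output is p1 s1 (x) Psi+ + p2 s2 (x) Psi-, and the partial transpose on C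
   turns the Bell projectors into (Podd +- Qflip)/2, where Podd projects onto
   span{|01>,|10>} and Qflip = |00><11| + |11><00|.  Hence the partially transposed output
   is M = 1/2 (S (x) Podd + D (x) Qflip).  With Peven the projector onto span{|00>,|11>},
   Podd^2 = Podd, Qflip^2 = Peven and the mixed products vanish, so the PSD matrix
   1/2 (S (x) Podd + |D| (x) Peven) squares to M^dagger M; by uniqueness of PSD square
   roots, ||M||_1 = Tr S + Tr |D| = 1 + ||D||_1, which is the claim. *)

Lemma unidx_idx m n (a : 'I_m) (b : 'I_n) : unidx (idx a b) = (a, b).
Proof. by rewrite /unidx /idx /mxvec_index cast_ordK enum_rankK. Qed.

Lemma ix1_idx m n (a : 'I_m) (b : 'I_n) : ix1 (idx a b) = a.
Proof. by rewrite /ix1 unidx_idx. Qed.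

Lemma ix2_idx m n (a : 'I_m) (b : 'I_n) : ix2 (idx a b) = b.
Proof. by rewrite /ix2 unidx_idx. Qed.

Lemma idx_ix m n (k : 'I_(m * n)) : idx (ix1 k) (ix2 k) = k.
Proof.
rewrite /ix1 /ix2 /idx /unidx /mxvec_index -surjective_pairing enum_valK.
by rewrite cast_ordKV.
Qed.

Lemma idx_eq m n (a a' : 'I_m) (b b' : 'I_n) :
  (idx a b == idx a' b') = (a == a') && (b == b').
Proof.
apply/idP/andP => [/eqP E | [/eqP -> /eqP ->] //]; split; apply/eqP.
- by rewrite -(ix1_idx a b) E ix1_idx.
- by rewrite -(ix2_idx a b) E ix2_idx.
Qed.

Lemma sum_idx m n (F : 'I_(m * n) -> algC) :
  \sum_k F k = \sum_a \sum_b F (idx a b).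
Proof.
rewrite pair_big /= (reindex (fun u : 'I_m * 'I_n => idx u.1 u.2)) //=.
exists (@unidx m n) => [u _ | k _]; last exact: idx_ix.
by rewrite unidx_idx -surjective_pairing.
Qed.

Lemma adjmxE m n (M : 'M[algC]_(m, n)) i j : adjmx M i j = (M j i)^*.
Proof. by rewrite /adjmx !mxE. Qed.

Lemma adjmxK m n (M : 'M[algC]_(m, n)) : adjmx (adjmx M) = M.
Proof. by apply/matrixP => i j; rewrite !adjmxE conjCK. Qed.

Lemma adjmxM m n p (A : 'M[algC]_(m, n)) (B : 'M[algC]_(n, p)) :
  adjmx (A *m B) = adjmx B *m adjmx A.
Proof. by rewrite /adjmx map_mxM trmx_mul. Qed.

Lemma adjmxD m n (A B : 'M[algC]_(m, n)) : adjmx (A + B) = adjmx A + adjmx B.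
Proof. by rewrite /adjmx map_mxD linearD. Qed.

Lemma adjmxZ m n a (A : 'M[algC]_(m, n)) : adjmx (a *: A) = a^* *: adjmx A.
Proof. by rewrite /adjmx map_mxZ linearZ. Qed.

Lemma adjmxN m n (A : 'M[algC]_(m, n)) : adjmx (- A) = - adjmx A.
Proof. by apply/matrixP => i j; rewrite !mxE rmorphN. Qed.

Lemma adjmx_delta m n (i : 'I_m) (j : 'I_n) : adjmx (delta_mx i j) = delta_mx j i.
Proof. by apply/matrixP => a b; rewrite adjmxE !mxE rmorph_nat andbC. Qed.

Lemma adjmx_diag n (r : 'rV[algC]_n) : (forall i, (r 0 i)^* = r 0 i) ->
  adjmx (diag_mx r) = diag_mx r.
Proof.
move=> Hr; apply/matrixP => a b; rewrite adjmxE !mxE rmorphMn eq_sym.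
by case: eqP => [->|_]; rewrite ?mulr0n ?mulr1n //; exact: Hr.
Qed.

Lemma quad_ge0 n (w : 'cV[algC]_n) : 0 <= (adjmx w *m w) 0 0.
Proof.
rewrite mxE; apply: sumr_ge0 => i _; rewrite adjmxE mulrC; exact: mul_conjC_ge0.
Qed.

Lemma quad_eq0 n (w : 'cV[algC]_n) : (adjmx w *m w) 0 0 = 0 -> w = 0.
Proof.
rewrite mxE => /eqP; rewrite psumr_eq0 => [/allP Hw | i _]; last first.
  by rewrite adjmxE mulrC mul_conjC_ge0.
apply/matrixP => i j; rewrite (ord1 j) mxE.
by have /implyP/(_ isT) := Hw i (mem_index_enum _); rewrite adjmxE mulrC mul_conjC_eq0 => /eqP.
Qed.

Lemma psd_gram m n (T : 'M[algC]_(m, n)) : psd (adjmx T *m T).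
Proof.
split; first by rewrite adjmxM adjmxK.
move=> v; have -> : adjmx v *m (adjmx T *m T) *m v = adjmx (T *m v) *m (T *m v).
  by rewrite adjmxM !mulmxA.
exact: quad_ge0.
Qed.

Lemma psdD n (A B : 'M[algC]_n) : psd A -> psd B -> psd (A + B).
Proof.
move=> [HA qA] [HB qB]; split; first by rewrite adjmxD HA HB.
by move=> v; rewrite mulmxDr mulmxDl mxE addr_ge0.
Qed.

Lemma psdZ n (c : algC) (A : 'M[algC]_n) : 0 <= c -> psd A -> psd (c *: A).
Proof.
move=> c0 [HA qA]; split; first by rewrite adjmxZ HA geC0_conj.
by move=> v; rewrite -scalemxAr -scalemxAl mxE mulr_ge0.
Qed.

Lemma herm_spec n (P : 'M[algC]_n) : adjmx P = P ->
  exists U : 'M_n, exists l : 'rV_n,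
    [/\ U *m adjmx U = 1%:M, P = adjmx U *m diag_mx l *m U &
        forall i, l 0 i \is Num.real].
Proof.
have adjE (M : 'M[algC]_n) : map_mx Num.conj M^T = adjmx M by rewrite /adjmx map_trmx.
move=> HP; have hP : P \is hermsymmx.
  by rewrite is_hermitianmxE expr0 scale1r adjE HP eqxx.
have Uu := spectral_unitarymx P.
exists (spectralmx P), (spectral_diag P); split.
- by move/unitarymxP: Uu; rewrite adjE.
- rewrite -adjE -invmx_unitary //; apply/orthomx_spectralP.
  exact: hermitian_normalmx.
- by move=> i; have /mxOverP := hermitian_spectral_diag_real hP; apply.
Qed.

Lemma psd_spec_ge0 n (P U : 'M[algC]_n) (l : 'rV_n) : psd P ->
  U *m adjmx U = 1%:M -> P = adjmx U *m diag_mx l *m U -> forall i, 0 <= l 0 i.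
Proof.
move=> [_ HP] HU EP i; have := HP (adjmx U *m delta_mx i 0).
rewrite adjmxM adjmxK adjmx_delta EP !mulmxA -[_ *m U *m adjmx U]mulmxA HU mulmx1.
rewrite -[_ *m U *m adjmx U]mulmxA HU mulmx1 -rowE -colE !mxE.
by rewrite eqxx mulr1n.
Qed.

Lemma psd_sqrt_ex n (P : 'M[algC]_n) : psd P -> exists S, psd S /\ S *m S = P.
Proof.
move=> HP; have [U [l [HU EP _]]] := herm_spec HP.1.
have l0 := psd_spec_ge0 HP HU EP.
pose s := \row_i sqrtC (l 0 i); pose r := \row_i sqrtC (s 0 i).
have ss : diag_mx s *m diag_mx s = diag_mx l.
  by rewrite mulmx_diag; congr diag_mx; apply/rowP => i; rewrite !mxE -expr2 sqrtCK.
have rr : diag_mx r *m diag_mx r = diag_mx s.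
  by rewrite mulmx_diag; congr diag_mx; apply/rowP => i; rewrite !mxE -expr2 sqrtCK.
have r_real i : (r 0 i)^* = r 0 i by rewrite geC0_conj // !mxE !sqrtC_ge0.
exists (adjmx U *m diag_mx s *m U); split.
  have -> : adjmx U *m diag_mx s *m U = adjmx (diag_mx r *m U) *m (diag_mx r *m U).
    by rewrite adjmxM adjmx_diag // !mulmxA -[_ *m diag_mx r *m diag_mx r]mulmxA rr.
  exact: psd_gram.
by rewrite EP !mulmxA -[_ *m U *m adjmx U]mulmxA HU mulmx1 -ss !mulmxA.
Qed.

Lemma psd_quad0 n (S : 'M[algC]_n) (v : 'cV[algC]_n) : psd S ->
  (adjmx v *m S *m v) 0 0 = 0 -> S *m v = 0.
Proof.
move=> /psd_sqrt_ex [R [[HR _] <-]].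
have -> : adjmx v *m (R *m R) *m v = adjmx (R *m v) *m (R *m v).
  by rewrite adjmxM HR !mulmxA.
by move/quad_eq0; rewrite -mulmxA => ->; rewrite mulmx0.
Qed.

Lemma herm_eq0 n (H : 'M[algC]_n) : adjmx H = H ->
  (forall (v : 'cV[algC]_n) (mu : algC), mu \is Num.real ->
     (adjmx v *m v) 0 0 = 1 -> H *m v = mu *: v -> mu = 0) -> H = 0.
Proof.
move=> HH Heig; have [W [mu [HW EH Hmu]]] := herm_spec HH.
suff mu0 i : mu 0 i = 0.
  have mu_eq0 : diag_mx mu = 0 by apply/matrixP => a b; rewrite !mxE mu0 mul0rn.
  by rewrite EH mu_eq0 mulmx0 mul0mx.
apply: (Heig (adjmx W *m delta_mx i 0)) => //.
  rewrite adjmxM adjmxK adjmx_delta !mulmxA -[_ *m W *m adjmx W]mulmxA HW mulmx1.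
  by rewrite mul_delta_mx mxE !eqxx.
rewrite EH !mulmxA -[_ *m W *m adjmx W]mulmxA HW mulmx1 -mulmxA mul_diag_mx.
rewrite scalemxAr; congr (_ *m _); apply/matrixP => a b; rewrite !mxE.
by case: eqP => [->|]; rewrite ?mulr1 ?mulr0.
Qed.

(* Uniqueness of the PSD square root: an eigenvector v of S - T with eigenvalue mu gives
   0 = v^dagger (S^2 - T^2) v = mu (v^dagger S v + v^dagger T v), and the second factor
   vanishes only if S v = T v = 0, forcing mu = 0. *)
Lemma psd_sqrt_uniq n (S T : 'M[algC]_n) :
  psd S -> psd T -> S *m S = T *m T -> S = T.
Proof.
move=> HS HT ST; apply/eqP; rewrite -subr_eq0; apply/eqP.
have herm : adjmx (S - T) = S - T by rewrite adjmxD adjmxN HS.1 HT.1.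
apply: herm_eq0 => // v mu mu_real vv Hv.
have Hvl : adjmx v *m (S - T) = mu *: adjmx v.
  by rewrite -{1}herm -adjmxM Hv adjmxZ conj_Creal.
have : mu * ((adjmx v *m S *m v) 0 0 + (adjmx v *m T *m v) 0 0) = 0.
  have -> : 0 = (adjmx v *m (S *m S - T *m T) *m v) 0 0 by rewrite ST subrr mulmx0 mul0mx mxE.
  have -> : S *m S - T *m T = S *m (S - T) + (S - T) *m T.
    by rewrite mulmxBr mulmxBl addrA subrK.
  rewrite mulmxDr mulmxDl -!mulmxA Hv !mulmxA Hvl.
  by rewrite -scalemxAr -!scalemxAl !mxE mulrDr.
move/eqP; rewrite mulf_eq0 paddr_eq0 ?HS.2 ?HT.2 // => /orP[/eqP // | /andP[/eqP S0 /eqP T0]].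
have : mu *: v = 0 by rewrite -Hv mulmxBl (psd_quad0 HS S0) (psd_quad0 HT T0) subrr.
move/(congr1 (fun w => (adjmx v *m w) 0 0)).
by rewrite -scalemxAr mxE vv mulr1 mulmx0 mxE.
Qed.

Lemma psd_sqrt_spec n (P : 'M[algC]_n) : psd P ->
  psd (psd_sqrt P) /\ psd_sqrt P *m psd_sqrt P = P.
Proof.
move=> /psd_sqrt_ex HP.
exact: (epsilon_spec (inhabits 0) (fun S : 'M[algC]_n => psd S /\ S *m S = P) HP).
Qed.

Lemma trnorm_charact n (M S : 'M[algC]_n) :
  psd S -> S *m S = adjmx M *m M -> trnorm M = \tr S.
Proof.
move=> HS ES; have [H1 H2] := psd_sqrt_spec (psd_gram M).
by rewrite /trnorm (psd_sqrt_uniq H1 HS) // H2 ES.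
Qed.

Lemma trnormZ n (c : algC) (M : 'M[algC]_n) : 0 <= c -> trnorm (c *: M) = c * trnorm M.
Proof.
move=> c0; have [HR RR] := psd_sqrt_spec (psd_gram M).
rewrite (@trnorm_charact _ _ (c *: psd_sqrt (adjmx M *m M))) ?mxtraceZ //.
  exact: psdZ.
by rewrite adjmxZ geC0_conj // -!scalemxAr -!scalemxAl RR.
Qed.

Lemma sum_op4 d m q (F : 'I_(d * m) -> 'I_q -> algC) :
  \sum_(k : 'I_(d * (m * q))) F (idx (ix1 k) (ix1 (ix2 k))) (ix2 (ix2 k)) =
  \sum_u \sum_t F u t.
Proof.
rewrite sum_idx [RHS]sum_idx.
under eq_bigr => a _ do under eq_bigr => b _ do rewrite !ix1_idx !ix2_idx.
under eq_bigr => a _ do rewrite (sum_idx (fun r => F (idx a (ix1 r)) (ix2 r))).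
apply: eq_bigr => a _; apply: eq_bigr => b _; apply: eq_bigr => c _.
by rewrite ix1_idx ix2_idx.
Qed.

Lemma tens_mul d m (X X' : 'M[algC]_(d * m)) (Y Y' : 'M[algC]_(2 * 2)) :
  tens_AB1 X Y *m tens_AB1 X' Y' = tens_AB1 (X *m X') (Y *m Y').
Proof.
apply/matrixP => i j; rewrite !mxE; under eq_bigr do rewrite !mxE.
rewrite (sum_op4 (fun u t => X (idx (ix1 i) (ix1 (ix2 i))) u * Y (ix2 (ix2 i)) t *
   (X' u (idx (ix1 j) (ix1 (ix2 j))) * Y' t (ix2 (ix2 j))))).
rewrite big_distrlr /=; apply: eq_bigr => u _; apply: eq_bigr => t _.
by rewrite mulrACA.
Qed.

Lemma tens0r d m (X : 'M[algC]_(d * m)) : tens_AB1 X 0 = 0.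
Proof. by apply/matrixP => i j; rewrite !mxE mulr0. Qed.

Lemma adjmx_tens d m (X : 'M[algC]_(d * m)) (Y : 'M[algC]_(2 * 2)) :
  adjmx (tens_AB1 X Y) = tens_AB1 (adjmx X) (adjmx Y).
Proof. by apply/matrixP => i j; rewrite !(adjmxE, mxE) rmorphM. Qed.

Lemma tr_tens d m (X : 'M[algC]_(d * m)) (Y : 'M[algC]_(2 * 2)) :
  \tr (tens_AB1 X Y) = \tr X * \tr Y.
Proof.
rewrite /mxtrace; under eq_bigr do rewrite mxE.
by rewrite (sum_op4 (fun u t => X u u * Y t t)) big_distrlr.
Qed.

Lemma psd_tens d m (X : 'M[algC]_(d * m)) (Y : 'M[algC]_(2 * 2)) :
  psd X -> psd Y -> psd (tens_AB1 X Y).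
Proof.
move=> /psd_sqrt_ex [A [[HA _] <-]] /psd_sqrt_ex [B [[HB _] <-]].
rewrite -tens_mul -{1}HA -{1}HB -adjmx_tens; exact: psd_gram.
Qed.

Definition blk {d k} (X : 'M[algC]_(d * k)) (r s : 'I_k) : 'M[algC]_d :=
  \matrix_(a, b) X (idx a r) (idx b s).

Section LiftedMap.
Variables (d d' : nat) (Lam : {linear 'M[algC]_d -> 'M[algC]_d'}).

Lemma apply_AE k (X : 'M[algC]_(d * k)) i j :
  apply_A (k := k) Lam X i j = Lam (blk X (ix2 i) (ix2 j)) (ix1 i) (ix1 j).
Proof. by rewrite mxE. Qed.

Lemma apply_AD k (X Y : 'M[algC]_(d * k)) :
  apply_A (k := k) Lam (X + Y) = apply_A Lam X + apply_A Lam Y.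
Proof.
apply/matrixP => i j; rewrite [RHS]mxE !apply_AE.
have -> : blk (X + Y) (ix2 i) (ix2 j) = blk X (ix2 i) (ix2 j) + blk Y (ix2 i) (ix2 j).
  by apply/matrixP => a b; rewrite !mxE.
by rewrite linearD mxE.
Qed.

Lemma apply_AZ k c (X : 'M[algC]_(d * k)) :
  apply_A (k := k) Lam (c *: X) = c *: apply_A Lam X.
Proof.
apply/matrixP => i j; rewrite [RHS]mxE !apply_AE.
have -> : blk (c *: X) (ix2 i) (ix2 j) = c *: blk X (ix2 i) (ix2 j).
  by apply/matrixP => a b; rewrite !mxE.
by rewrite linearZ mxE.
Qed.

Lemma apply_AB k (X Y : 'M[algC]_(d * k)) :
  apply_A (k := k) Lam (X - Y) = apply_A Lam X - apply_A Lam Y.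
Proof. by rewrite apply_AD -scaleN1r apply_AZ scaleN1r. Qed.

Lemma apply_A_tens m (X : 'M[algC]_(d * m)) (Y : 'M[algC]_(2 * 2)) :
  apply_A (k := m * (2 * 2)) Lam (tens_AB1 X Y) = tens_AB1 (apply_A (k := m) Lam X) Y.
Proof.
apply/matrixP => i j; rewrite apply_AE [RHS]mxE apply_AE !ix1_idx !ix2_idx.
have -> : blk (tens_AB1 X Y) (ix2 i) (ix2 j) =
   Y (ix2 (ix2 i)) (ix2 (ix2 j)) *: blk X (ix1 (ix2 i)) (ix1 (ix2 j)).
  by apply/matrixP => a b; rewrite !mxE !ix1_idx !ix2_idx mulrC.
by rewrite linearZ mxE mulrC.
Qed.

(* If Lam preserves traces, so does Lam (x) id: the trace is the sum of diagonal blocks. *)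
Lemma tr_apply_A k (X : 'M[algC]_(d * k)) :
  (forall Z, \tr (Lam Z) = \tr Z) -> \tr (apply_A (k := k) Lam X) = \tr X.
Proof.
move=> HT; rewrite /mxtrace; under eq_bigr do rewrite apply_AE.
rewrite sum_idx; under eq_bigr => a _ do under eq_bigr => b _ do rewrite ix1_idx ix2_idx.
rewrite exchange_big [RHS]sum_idx [RHS]exchange_big /=; apply: eq_bigr => b _.
by rewrite -[LHS]/(\tr (Lam (blk X b b))) HT; apply: eq_bigr => a _; rewrite mxE.
Qed.

End LiftedMap.

Lemma I2P (x : 'I_2) : x = 0 \/ x = 1.
Proof. by case: x => [[|[|n]] H] //; [left | right]; apply: val_inj. Qed.

Lemma sum2 (F : 'I_2 -> algC) : \sum_x F x = F 0 + F 1.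
Proof. by rewrite big_ord_recl big_ord1; congr (F _ + F _); apply: val_inj. Qed.

Lemma eq4 (A B : 'M[algC]_(2 * 2)) :
  (forall b c b' c', A (idx b c) (idx b' c') = B (idx b c) (idx b' c')) -> A = B.
Proof. by move=> H; apply/matrixP => i j; rewrite -(idx_ix i) -(idx_ix j). Qed.

Lemma mul4E (A B : 'M[algC]_(2 * 2)) b c b' c' :
  (A *m B) (idx b c) (idx b' c') =
  A (idx b c) (idx 0 0) * B (idx 0 0) (idx b' c') +
  A (idx b c) (idx 0 1) * B (idx 0 1) (idx b' c') +
 (A (idx b c) (idx 1 0) * B (idx 1 0) (idx b' c') +
  A (idx b c) (idx 1 1) * B (idx 1 1) (idx b' c')).
Proof. by rewrite mxE sum_idx !sum2. Qed.

Lemma tr4 (A : 'M[algC]_(2 * 2)) :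
  \tr A = A (idx 0 0) (idx 0 0) + A (idx 0 1) (idx 0 1) +
          (A (idx 1 0) (idx 1 0) + A (idx 1 1) (idx 1 1)).
Proof. by rewrite /mxtrace sum_idx !sum2. Qed.

Definition mk4 (f : 'I_2 -> 'I_2 -> 'I_2 -> 'I_2 -> nat) : 'M[algC]_(2 * 2) :=
  \matrix_(i, j) (f (ix1 i) (ix2 i) (ix1 j) (ix2 j))%:R.

Lemma mk4E f b c b' c' : mk4 f (idx b c) (idx b' c') = (f b c b' c')%:R.
Proof. by rewrite mxE !ix1_idx !ix2_idx. Qed.

Lemma adj_mk4 f : adjmx (mk4 f) = mk4 (fun b c b' c' => f b' c' b c).
Proof. by apply/matrixP => i j; rewrite adjmxE !mxE rmorph_nat. Qed.

Definition Podd := mk4 (fun b c b' c' => (b == b') && (c == c') && (b != c)).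
Definition Peven := mk4 (fun b c b' c' => (b == b') && (c == c') && (b == c)).
Definition Qflip := mk4 (fun b c b' c' => (b == c) && (b' == c') && (b != b')).

Ltac case4 b c b' c' :=
  case: (I2P b) => ->; case: (I2P c) => ->; case: (I2P b') => ->; case: (I2P c') => ->.

Ltac check4 :=
  apply: eq4; let b := fresh "b" in let c := fresh "c" in
  let b' := fresh "b'" in let c' := fresh "c'" in
  intros b c b' c'; rewrite ?mul4E !mk4E ?mxE -?natrM -?natrD; case4 b c b' c'.

Lemma PoddPodd : Podd *m Podd = Podd. Proof. by check4. Qed.
Lemma PoddPeven : Podd *m Peven = 0. Proof. by check4. Qed.
Lemma PevenPodd : Peven *m Podd = 0. Proof. by check4. Qed.
Lemma PevenPeven : Peven *m Peven = Peven. Proof. by check4. Qed.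
Lemma PoddQflip : Podd *m Qflip = 0. Proof. by check4. Qed.
Lemma QflipPodd : Qflip *m Podd = 0. Proof. by check4. Qed.
Lemma QflipQflip : Qflip *m Qflip = Peven. Proof. by check4. Qed.

Lemma adjPodd : adjmx Podd = Podd. Proof. by rewrite adj_mk4; check4. Qed.
Lemma adjPeven : adjmx Peven = Peven. Proof. by rewrite adj_mk4; check4. Qed.
Lemma adjQflip : adjmx Qflip = Qflip. Proof. by rewrite adj_mk4; check4. Qed.

Lemma trPodd : \tr Podd = 2. Proof. by rewrite tr4 !mk4E -!natrD. Qed.
Lemma trPeven : \tr Peven = 2. Proof. by rewrite tr4 !mk4E -!natrD. Qed.

Lemma psdPodd : psd Podd.
Proof. by rewrite -PoddPodd -{1}adjPodd; apply: psd_gram. Qed.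
Lemma psdPeven : psd Peven.
Proof. by rewrite -PevenPeven -{1}adjPeven; apply: psd_gram. Qed.

Definition ptrans2 (Y : 'M[algC]_(2 * 2)) : 'M[algC]_(2 * 2) :=
  \matrix_(i, j) Y (idx (ix1 i) (ix2 j)) (idx (ix1 j) (ix2 i)).

Lemma ptransC_tens d m (X : 'M[algC]_(d * m)) (Y : 'M[algC]_(2 * 2)) :
  ptransC (tens_AB1 X Y) = tens_AB1 X (ptrans2 Y).
Proof.
apply/matrixP => i j; rewrite /ptransC /setC /idxC !mxE.
by rewrite !(ix1_idx, ix2_idx).
Qed.

Lemma ptransCD d m (A B : op4 d m) : ptransC (A + B) = ptransC A + ptransC B.
Proof. by apply/matrixP => i j; rewrite !mxE. Qed.

Lemma ptransCZ d m c (A : op4 d m) : ptransC (c *: A) = c *: ptransC A.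
Proof. by apply/matrixP => i j; rewrite !mxE. Qed.

Definition invsqrt2 : algC := (sqrtC 2)^-1.

Lemma invsqrt2_real : invsqrt2 \is Num.real.
Proof. by rewrite ger0_real // /invsqrt2 invr_ge0 sqrtC_ge0 ler0n. Qed.

Lemma invsqrt2_sq : invsqrt2 * invsqrt2 = 2^-1.
Proof. by rewrite /invsqrt2 -invfM -expr2 sqrtCK. Qed.

Lemma projE n (v : 'cV[algC]_n) i j : proj v i j = v i 0 * (v j 0)^*.
Proof. by rewrite /proj mxE big_ord1 adjmxE. Qed.

Lemma psi_plusE b c : psi_plus (idx b c) 0 =
  invsqrt2 * ((b == 0) && (c == 1) + (b == 1) && (c == 0))%:R.
Proof. by rewrite /psi_plus /ket2 !mxE !idx_eq !eqxx !andbT natrD. Qed.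

Lemma psi_minusE b c : psi_minus (idx b c) 0 =
  invsqrt2 * (((b == 0) && (c == 1))%:R - ((b == 1) && (c == 0))%:R).
Proof. by rewrite /psi_minus /ket2 !mxE !idx_eq !eqxx !andbT. Qed.

Lemma ptrans2_psi_plus : ptrans2 (proj psi_plus) = 2^-1 *: (Podd + Qflip).
Proof.
apply: eq4 => b c b' c'.
rewrite mxE !(ix1_idx, ix2_idx) projE !psi_plusE conj_Creal; last first.
  by rewrite rpredM ?invsqrt2_real ?realn.
rewrite mulrACA invsqrt2_sq !mxE !(ix1_idx, ix2_idx).
by case4 b c b' c'; rewrite /= ?mulr1n ?mulr0n; ring.
Qed.

Lemma ptrans2_psi_minus : ptrans2 (proj psi_minus) = 2^-1 *: (Podd - Qflip).
Proof.
apply: eq4 => b c b' c'.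
rewrite mxE !(ix1_idx, ix2_idx) projE !psi_minusE conj_Creal; last first.
  by rewrite rpredM ?invsqrt2_real // rpredB ?realn.
rewrite mulrACA invsqrt2_sq !mxE !(ix1_idx, ix2_idx).
by case4 b c b' c'; rewrite /= ?mulr1n ?mulr0n; ring.
Qed.

Lemma ptransC_bell_mixture d m (X1 X2 : 'M[algC]_(d * m)) (p1 p2 : algC) :
  ptransC (p1 *: tens_AB1 X1 (proj psi_plus) + p2 *: tens_AB1 X2 (proj psi_minus)) =
  2^-1 *: (tens_AB1 (p1 *: X1 + p2 *: X2) Podd + tens_AB1 (p1 *: X1 - p2 *: X2) Qflip).
Proof.
rewrite ptransCD !ptransCZ !ptransC_tens ptrans2_psi_plus ptrans2_psi_minus.
by apply/matrixP => i j; rewrite !mxE; ring.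
Qed.

Lemma sq_Podd_Qflip d m (X Y : 'M[algC]_(d * m)) :
  let N := tens_AB1 X Podd + tens_AB1 Y Qflip in
  N *m N = tens_AB1 (X *m X) Podd + tens_AB1 (Y *m Y) Peven.
Proof.
rewrite /= mulmxDl !mulmxDr !tens_mul PoddPodd PoddQflip QflipPodd QflipQflip.
by rewrite !tens0r addr0 add0r.
Qed.

Lemma sq_Podd_Peven d m (X Z : 'M[algC]_(d * m)) :
  let N := tens_AB1 X Podd + tens_AB1 Z Peven in
  N *m N = tens_AB1 (X *m X) Podd + tens_AB1 (Z *m Z) Peven.
Proof.
rewrite /= mulmxDl !mulmxDr !tens_mul PoddPodd PoddPeven PevenPodd PevenPeven.
by rewrite !tens0r addr0 add0r.
Qed.

(* Trace norm of X (x) Podd + Y (x) Qflip for PSD X and Hermitian Y: its modulus is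
   X (x) Podd + |Y| (x) Peven, so ||.||_1 = 2 (Tr X + ||Y||_1). *)
Lemma trnorm_Podd_Qflip d m (X Y : 'M[algC]_(d * m)) : psd X -> adjmx Y = Y ->
  trnorm (tens_AB1 X Podd + tens_AB1 Y Qflip) = 2 * (\tr X + trnorm Y).
Proof.
move=> pX hY; have [pR RR] := psd_sqrt_spec (psd_gram Y).
set R := psd_sqrt _ in pR RR.
have hN : adjmx (tens_AB1 X Podd + tens_AB1 Y Qflip) = tens_AB1 X Podd + tens_AB1 Y Qflip.
  by rewrite adjmxD !adjmx_tens pX.1 hY adjPodd adjQflip.
rewrite (@trnorm_charact _ _ (tens_AB1 X Podd + tens_AB1 R Peven)).
- by rewrite /trnorm -/R mxtraceD !tr_tens trPodd trPeven [RHS]mulrC mulrDl.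
- exact: psdD (psd_tens pX psdPodd) (psd_tens pR psdPeven).
- by rewrite hN sq_Podd_Peven sq_Podd_Qflip RR hY.
Qed.

Unset Implicit Arguments.

Theorem mainTheorem4 (d m d' : nat)
    (rho1 rho2 : 'M[algC]_(d * m)) (p1 p2 : algC)
    (Hrho1 : density rho1) (Hrho2 : density rho2)
    (Hp1 : 0 <= p1) (Hp2 : 0 <= p2) (Hp : p1 + p2 = 1)
    (Lam : {linear 'M[algC]_d -> 'M[algC]_d'}) (HLam : CPTP Lam) :
  let rho : op4 d m :=
    p1 *: tens_AB1 rho1 (proj psi_plus) + p2 *: tens_AB1 rho2 (proj psi_minus) in
  negativity_ABC (apply_A (k := m * (2 * 2)) Lam rho) =
    trnorm (apply_A (k := m) Lam (p1 *: rho1 - p2 *: rho2)) / 2.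
Proof.
move=> rho; have [HCP HTP] := HLam.
set s1 := apply_A (k := m) Lam rho1; set s2 := apply_A (k := m) Lam rho2.
have [ps1 ps2] : psd s1 /\ psd s2 by split; apply: HCP; [exact: Hrho1.1 | exact: Hrho2.1].
have tr1 : \tr s1 = 1 by rewrite tr_apply_A //; exact: Hrho1.2.
have tr2 : \tr s2 = 1 by rewrite tr_apply_A //; exact: Hrho2.2.
have pS : psd (p1 *: s1 + p2 *: s2) by apply: psdD; apply: psdZ.
have trS : \tr (p1 *: s1 + p2 *: s2) = 1 by rewrite mxtraceD !mxtraceZ tr1 tr2 !mulr1.
have hD : adjmx (p1 *: s1 - p2 *: s2) = p1 *: s1 - p2 *: s2.
  by rewrite adjmxD adjmxN !adjmxZ ps1.1 ps2.1 !geC0_conj.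
rewrite /negativity_ABC /rho apply_AD !apply_AZ !apply_A_tens ptransC_bell_mixture.
rewrite apply_AB !apply_AZ trnormZ ?invr_ge0 ?ler0n // trnorm_Podd_Qflip // trS.
by rewrite mulrA mulVf ?pnatr_eq0 // mul1r addrC addKr.
Qed.
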